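(* Let $0\le\tau\le\varepsilon$, $\lambda:=\tau/\varepsilon$, $u_n\in\mathcal V_{[0,1]}$. If $u$ is a minimiser of \[ \lambda\langle u,\mathbf{1} -u \rangle_{\mathcal V} + \|u-e^{-\tau\Delta}u_n\|^2_{\mathcal V} \] over $\{u\in\mathcal V_{[0,1]}:\mathcal M(u)=\mathcal M(u_n)\}$, then there exists $\beta\in\mathcal B(u)$ such that \[ u -e^{-\tau\Delta}u_n-\lambda u+\lambda\bar u\mathbf{1} =\lambda\beta -\lambda\bar\beta\mathbf{1}. \]
   Context: $G=(V,E)$ is a finite, simple, connected, undirected graph with weights $\omega_{ij}=\omega_{ji}>0$ for $ij\in E$, $\omega_{ij}=0$ otherwise; $d_i=\sum_j\omega_{ij}$, $r\in[0,1]$ fixed. $\mathcal V$ = functions $V\to\mathbb R$ with $\langle u,v\rangle_{\mathcal V}=\sum_i u_iv_id_i^r$ and norm $\|\cdot\|_{\mathcal V}$; $\mathcal V_{[0,1]}$ = functions $V\to[0,1]$. $(\Delta u)_i=d_i^{-r}\sum_j\omega_{ij}(u_i-u_j)$, $e^{-\tau\Delta}$ its matrix exponential. $\mathbf 1$ all-ones; $\mathcal M(u)=\langle u,\mathbf 1\rangle_{\mathcal V}$; $\bar v=\mathcal M(v)/\mathcal M(\mathbf 1)$. $\varepsilon>0$. For $u\in\mathcal V_{[0,1]}$, $\mathcal B(u)$ = set of $\beta\in\mathcal V$ with $\beta_i\ge0$ if $u_i=0$, $\beta_i=0$ if $0<u_i<1$, $\beta_i\le0$ if $u_i=1$. *)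

From HB Require Import structures.
From mathcomp Require Import all_boot all_order all_algebra.
From mathcomp Require Import all_classical all_reals all_analysis.
Set Implicit Arguments. Unset Strict Implicit. Unset Printing Implicit Defensive.
Import Order.TTheory GRing.Theory Num.Theory.
Local Open Scope ring_scope.

Section Defs.
Variable R : realType.
Variable n : nat.

Definition deg (w : 'M[R]_n) (i : 'I_n) : R := \sum_(j < n) w i j.

Definition ipV (w : 'M[R]_n) (r : R) (u v : 'cV[R]_n) : R :=
  \sum_(i < n) u i 0 * v i 0 * (deg w i) `^ r.

Definition normV2 (w : 'M[R]_n) (r : R) (u : 'cV[R]_n) : R := ipV w r u u.

Definition onesV : 'cV[R]_n := const_mx 1.

Definition massV (w : 'M[R]_n) (r : R) (u : 'cV[R]_n) : R := ipV w r u onesV.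

Definition meanV (w : 'M[R]_n) (r : R) (v : 'cV[R]_n) : R :=
  massV w r v / massV w r onesV.

(* (Delta u)_i = d_i^{-r} sum_j w_ij (u_i - u_j) *)
Definition laplacian (w : 'M[R]_n) (r : R) : 'M[R]_n :=
  \matrix_(i, j) ((deg w i) `^ (- r) *
     ((i == j)%:R * deg w i - w i j)).

Definition mxpow (A : 'M[R]_n) (k : nat) : 'M[R]_n := iter k (mulmx A) 1%:M.

Definition expm (A : 'M[R]_n) : 'M[R]_n :=
  \matrix_(i, j) limn (series (fun k : nat => (mxpow A k) i j / (k`!)%:R : R^o)).

Definition inV01 (u : 'cV[R]_n) : Prop := forall i, 0 <= u i 0 <= 1.

Definition inB (u beta : 'cV[R]_n) : Prop :=
  forall i, (u i 0 = 0 -> 0 <= beta i 0) /\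
            (0 < u i 0 < 1 -> beta i 0 = 0) /\
            (u i 0 = 1 -> beta i 0 <= 0).

End Defs.

From mathcomp Require Import all_boot all_order all_algebra.
From mathcomp Require Import all_classical all_reals all_analysis.
From mathcomp Require Import ring lra.
Import Order.TTheory GRing.Theory Num.Theory.
Set Implicit Arguments.
Unset Strict Implicit.
Unset Printing Implicit Defensive.
Local Open Scope ring_scope.

(* Let z := e^{-tau Delta} u_n.  The weights d_i^r annihilate the Laplacian
   from the left, so the heat semigroup preserves mass and M(z) = M(u).  Let
   g := u - z - lam u + lam/2 be half the gradient of the energy at u.  Moving
   mass t from a vertex k with u_k > 0 to a vertex j with u_j < 1 keeps u
   admissible for small t > 0 and changes the energy by
   t (2 (g_j - g_k) + O(t)), so minimality forces g_k <= g_j.  Hence some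
   constant c has g - c 1 in B(u), and beta := (g - c 1) / lam works: the mean
   terms agree because M(z) = M(u).  When tau = 0 the minimiser is u_n itself
   and beta = 0 works. *)

Section MatrixExponential.
Local Open Scope classical_set_scope.
Variables (R : realType) (n : nat).
Implicit Types (A : 'M[R]_n) (p : 'rV[R]_n).

Definition mx_abs_sum A : R := \sum_i \sum_j `|A i j|.

Lemma mx_abs_sum_ge0 A : 0 <= mx_abs_sum A.
Proof. by apply: sumr_ge0 => i _; apply: sumr_ge0. Qed.

Lemma row_abs_sum_le A i : \sum_j `|A i j| <= mx_abs_sum A.
Proof.
rewrite /mx_abs_sum [X in _ <= X](bigD1 i) //= lerDl.
by apply: sumr_ge0 => k _; apply: sumr_ge0.
Qed.

Lemma mxpowS A k : mxpow A k.+1 = A *m mxpow A k.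
Proof. by []. Qed.

Lemma norm_mxpow_le A k i j : `|mxpow A k i j| <= mx_abs_sum A ^+ k.
Proof.
elim: k i j => [|k IH] i j.
  by rewrite /mxpow /= mxE; case: (i == j); rewrite ?normr1 ?normr0.
rewrite mxpowS mxE exprS (le_trans (ler_norm_sum _ _ _)) //.
apply: (@le_trans _ _ (\sum_l `|A i l| * mx_abs_sum A ^+ k)).
  by apply: ler_sum => l _; rewrite normrM ler_wpM2l.
by rewrite -mulr_suml ler_wpM2r ?exprn_ge0 ?mx_abs_sum_ge0 ?row_abs_sum_le.
Qed.

Lemma expm_series_cvg A i j :
  cvgn (series (fun k : nat => mxpow A k i j / k`!%:R : R^o)).
Proof.
apply/normed_cvg/(series_le_cvg _ _ _ (is_cvg_series_exp_coeff (mx_abs_sum A))).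
- by move=> k; apply: normr_ge0.
- by move=> k; apply/exp_coeff_ge0/mx_abs_sum_ge0.
- move=> k /=; rewrite /exp_coeff normrM [`|_^-1|]ger0_norm ?invr_ge0 ?ler0n //.
  by rewrite ler_wpM2r ?invr_ge0 ?ler0n ?norm_mxpow_le.
Qed.

Lemma mulmx_expm_id p A : p *m A = 0 -> p *m expm A = p.
Proof.
move=> pA0; apply/rowP => j; rewrite !mxE.
pose s i := series (fun k : nat => mxpow A k i j / k`!%:R : R^o).
have lim_sum : (fun N => \sum_i p 0 i * s i N) @ \oo -->
    (\sum_i p 0 i * expm A i j : R^o).
  under [X in _ --> X]eq_bigr do rewrite mxE.
  apply: (@cvg_big R^o 'I_n +%R 0 predT add_continuous) => i _.
  by apply: cvgMl_tmp; apply: expm_series_cvg.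
have p_mxpow k : p *m mxpow A k = if k is 0 then p else 0.
  by case: k => [|k]; rewrite ?mulmx1 // mxpowS mulmxA pA0 mul0mx.
have coef k : \sum_i p 0 i * (mxpow A k i j / k`!%:R) = (p *m mxpow A k) 0 j / k`!%:R.
  by rewrite mxE mulr_suml; apply: eq_bigr => i _; rewrite mulrA.
have partial_sum N : \sum_i p 0 i * s i N.+1 = p 0 j.
  rewrite /s /series; under eq_bigr do rewrite mulr_sumr.
  rewrite exchange_big /=; under eq_bigr do rewrite coef p_mxpow.
  rewrite big_nat_recl //= big1 => [|k _]; last by rewrite mxE mul0r.
  by rewrite fact0 divr1 addr0.
have lim_const : (fun N => \sum_i p 0 i * s i N) @ \oo --> (p 0 j : R^o).
  by rewrite -cvg_shiftS; under eq_fun do rewrite /= partial_sum; apply: cvg_cst.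
exact: (cvg_unique _ lim_sum lim_const).
Qed.

Lemma expm0 : expm (0 : 'M[R]_n) = 1%:M.
Proof.
apply/matrixP => i j; rewrite mxE; apply: (@cvg_lim R^o); first exact: norm_hausdorff.
rewrite -cvg_shiftS; under eq_fun => N.
  rewrite /= /series /= big_nat_recl // big1 => [|k _]; last first.
    by rewrite mxpowS mul0mx mxE mul0r.
  rewrite fact0 divr1 addr0; over.
exact: cvg_cst.
Qed.

End MatrixExponential.

Lemma sumrB_pair (V : zmodType) (I : finType) (f g : I -> V) (j k : I) :
  j != k -> (forall i, i != j -> i != k -> f i = g i) ->
  \sum_i f i - \sum_i g i = (f j - g j) + (f k - g k).
Proof.
move=> jk fg; rewrite -sumrB (bigD1 j) //= (bigD1 k) 1?eq_sym //= big1 ?addr0 //.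
by move=> i /andP[ij ik]; rewrite fg ?subrr.
Qed.

Lemma quadratic_lt0_near0 (R : realFieldType) (a b D : R) :
  a < 0 -> 0 < b -> exists2 t, 0 < t <= b & t * (2 * a + t * D) < 0.
Proof.
move=> a_lt0 b_gt0; set t := Num.min b (- a / (`|D| + 1)).
have D1_gt0 : 0 < `|D| + 1 by rewrite ltr_pwDr.
have t_gt0 : 0 < t by rewrite lt_min b_gt0 divr_gt0 // oppr_gt0.
have tD1 : t * `|D| + t <= - a.
  by rewrite -[t in _ + t]mulr1 -mulrDr -ler_pdivlMr // ge_min lexx orbT.
have tD : t * D <= t * `|D| by apply: ler_wpM2l; [exact: ltW | exact: ler_norm].
exists t; first by rewrite t_gt0 ge_min lexx.
by rewrite pmulr_rlt0 //; lra.
Qed.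

Section Energy.
Variables (R : realType) (n : nat).
Implicit Types (m : 'I_n -> R) (lam : R) (z u v b : 'cV[R]_n).

Definition energy_density lam (zi x : R) : R := lam * (x * (1 - x)) + (x - zi) ^+ 2.

Definition energy m lam z v : R := \sum_i energy_density lam (z i 0) (v i 0) * m i.

Definition wmass m v : R := \sum_i v i 0 * m i.

Definition half_grad lam z u : 'cV[R]_n := u - z - lam *: u + (lam / 2) *: onesV R n.

Lemma half_gradE lam z u i :
  half_grad lam z u i 0 = u i 0 - z i 0 - lam * u i 0 + lam / 2.
Proof. by rewrite !mxE mulr1. Qed.

Lemma energy_density_shift lam zi x s :
  energy_density lam zi (x + s) - energy_density lam zi x
  = s * (2 * (x - zi - lam * x + lam / 2) + s * (1 - lam)).
Proof. by rewrite /energy_density; field. Qed.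

Lemma inBZ a u b : 0 <= a -> inB u b -> inB u (a *: b).
Proof.
move=> a_ge0 ub i; rewrite mxE; have [b0 [b1 b2]] := ub i.
split; [|split] => [/b0|/b1->|/b2]; rewrite ?mulr0 //.
- exact: mulr_ge0.
- exact: mulr_ge0_le0.
Qed.

Section Transfer.
Variables (m : 'I_n -> R) (u : 'cV[R]_n) (j k : 'I_n) (t : R).
Hypothesis m_gt0 : forall i, 0 < m i.
Hypothesis jk : j != k.

Let m_neq0 i : m i != 0 := lt0r_neq0 (m_gt0 i).

Definition transfer : 'cV[R]_n :=
  \col_i (u i 0 + t * ((i == j)%:R / m j - (i == k)%:R / m k)).

Lemma transfer_j : transfer j 0 = u j 0 + t / m j.
Proof. by rewrite mxE eqxx (negPf jk) /=; field; rewrite !m_neq0. Qed.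

Lemma transfer_k : transfer k 0 = u k 0 - t / m k.
Proof. by rewrite mxE eqxx eq_sym (negPf jk) /=; field; rewrite !m_neq0. Qed.

Lemma transfer_other i : i != j -> i != k -> transfer i 0 = u i 0.
Proof. by move=> /negPf ij /negPf ik; rewrite mxE ij ik !mul0r subrr mulr0 addr0. Qed.

Lemma wmass_transfer : wmass m transfer = wmass m u.
Proof.
apply/eqP; rewrite -subr_eq0 (sumrB_pair jk) => [|i ij ik]; last by rewrite transfer_other.
by rewrite transfer_j transfer_k; apply/eqP; field; rewrite !m_neq0.
Qed.

Lemma inV01_transfer :
  inV01 u -> 0 <= t -> t <= (1 - u j 0) * m j -> t <= u k 0 * m k -> inV01 transfer.
Proof.
move=> u01 t_ge0 t_le_j t_le_k i.
have tj_ge0 : 0 <= t / m j := divr_ge0 t_ge0 (ltW (m_gt0 j)).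
have tk_ge0 : 0 <= t / m k := divr_ge0 t_ge0 (ltW (m_gt0 k)).
have [->|ij] := eqVneq i j.
  have : t / m j <= 1 - u j 0 by rewrite ler_pdivrMr.
  by rewrite transfer_j; case/andP: (u01 j) => *; apply/andP; split; lra.
have [->|ik] := eqVneq i k.
  have : t / m k <= u k 0 by rewrite ler_pdivrMr.
  by rewrite transfer_k; case/andP: (u01 k) => *; apply/andP; split; lra.
by rewrite transfer_other.
Qed.

Lemma energy_transfer lam z :
  energy m lam z transfer - energy m lam z u
  = t * (2 * (half_grad lam z u j 0 - half_grad lam z u k 0)
         + t * ((1 - lam) * ((m j)^-1 + (m k)^-1))).
Proof.
rewrite (sumrB_pair jk) => [|i ij ik]; last by rewrite transfer_other.
rewrite -!mulrBl transfer_j transfer_k.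
rewrite !energy_density_shift !half_gradE.
by field; rewrite !m_neq0.
Qed.

End Transfer.

Section Minimiser.
Variables (m : 'I_n -> R) (lam : R) (z u : 'cV[R]_n).
Hypothesis m_gt0 : forall i, 0 < m i.
Hypothesis u01 : inV01 u.
Hypothesis u_min : forall v, inV01 v -> wmass m v = wmass m u ->
  energy m lam z u <= energy m lam z v.

Lemma minimiser_eq_target : lam = 0 -> inV01 z -> wmass m z = wmass m u -> u = z.
Proof.
move=> lam0 z01 mass_z; have := u_min z01 mass_z.
have -> : energy m lam z z = 0.
  rewrite /energy big1 // => i _.
  by rewrite /energy_density lam0 subrr; ring.
move=> energy_le0.
have term_ge0 i : 0 <= energy_density lam (z i 0) (u i 0) * m i.
  by rewrite /energy_density lam0 mul0r add0r mulr_ge0 ?sqr_ge0 ?ltW.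
have energy0 : energy m lam z u = 0.
  by apply/le_anti/andP; split; [exact: energy_le0 | exact: sumr_ge0].
have term0 i : energy_density lam (z i 0) (u i 0) * m i = 0 :=
  psumr_eq0P (fun i _ => term_ge0 i) energy0 isT.
apply/matrixP => i j; rewrite ord1; move/eqP: (term0 i).
rewrite /energy_density lam0 mul0r add0r mulf_eq0 (gt_eqF (m_gt0 i)) orbF.
by rewrite sqrf_eq0 subr_eq0 => /eqP.
Qed.

Lemma half_grad_exchange j k :
  u j 0 < 1 -> 0 < u k 0 -> half_grad lam z u k 0 <= half_grad lam z u j 0.
Proof.
move=> uj_lt1 uk_gt0; have [<-|jk] := eqVneq j k; first by [].
rewrite leNgt; apply/negP; rewrite -subr_lt0 => descent.
pose D := (1 - lam) * ((m j)^-1 + (m k)^-1).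
have room_gt0 : 0 < Num.min ((1 - u j 0) * m j) (u k 0 * m k).
  by rewrite lt_min !mulr_gt0 // subr_gt0.
have [t /andP[t_gt0]] := quadratic_lt0_near0 D descent room_gt0.
rewrite le_min => /andP[t_le_j t_le_k].
have v01 := inV01_transfer m_gt0 jk u01 (ltW t_gt0) t_le_j t_le_k.
have := u_min v01 (wmass_transfer u t m_gt0 jk).
by rewrite -subr_ge0 energy_transfer // leNgt => /negP.
Qed.

Lemma half_grad_multiplier : exists c, inB u (half_grad lam z u - c *: onesV R n).
Proof.
pose g i := half_grad lam z u i 0.
suff [c kkt] : exists c, forall i,
    [/\ u i 0 = 0 -> c <= g i, 0 < u i 0 < 1 -> g i = c & u i 0 = 1 -> g i <= c].
  exists c => i; rewrite !mxE !mulr1 -half_gradE -/(g i); have [kkt0 kkt1 kkt2] := kkt i.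
  rewrite subr_ge0 subr_le0; split; [exact: kkt0 | split; [|exact: kkt2]].
  by move/kkt1 ->; rewrite subrr.
case: (pickP (fun i => 0 < u i 0)) => [k1 uk1_gt0 | u_eq0].
  have [k uk_gt0 k_max] := @arg_maxP _ R _ k1 (fun i => 0 < u i 0) g uk1_gt0.
  exists (g k) => i; split => [ui0 | /andP[ui_gt0 ui_lt1] | ui1].
  - by apply: half_grad_exchange; rewrite // ui0 ltr01.
  - by apply/le_anti/andP; split; [exact: k_max | exact: half_grad_exchange].
  - by apply: k_max; rewrite /= ui1 ltr01.
exists (\big[Order.min/0]_i g i) => i; split => [_ | /andP[ui_gt0 _] | ui1].
- exact: bigmin_le.
- by rewrite u_eq0 in ui_gt0.
- by have := u_eq0 i; rewrite /= ui1 ltr01.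
Qed.

End Minimiser.

End Energy.

Section GraphMass.
Variables (R : realType) (n : nat) (w : 'M[R]_n) (r : R).
Implicit Types (lam : R) (x z u v : 'cV[R]_n).

Lemma massVD x y : massV w r (x + y) = massV w r x + massV w r y.
Proof. by rewrite -big_split; apply: eq_bigr => i _; rewrite !mxE !mulrDl. Qed.

Lemma massVZ a x : massV w r (a *: x) = a * massV w r x.
Proof. by rewrite mulr_sumr; apply: eq_bigr => i _; rewrite !mxE !mulrA. Qed.

Lemma massVN x : massV w r (- x) = - massV w r x.
Proof. by rewrite -scaleN1r massVZ mulN1r. Qed.

Definition mass_weight (i : 'I_n) : R := deg w i `^ r.

Definition mass_row : 'rV[R]_n := \row_i mass_weight i.

Lemma massV_mulmx x : massV w r x = (mass_row *m x) 0 0.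
Proof.
by rewrite mxE; apply: eq_bigr => i _; rewrite !mxE mulr1 mulrC.
Qed.

Lemma massV_wmass x : massV w r x = wmass mass_weight x.
Proof. by apply: eq_bigr => i _; rewrite mxE mulr1. Qed.

Lemma energy_ipV lam z v :
  lam * ipV w r v (onesV R n - v) + normV2 w r (v - z) = energy mass_weight lam z v.
Proof.
rewrite /normV2 /ipV mulr_sumr -big_split /=; apply: eq_bigr => i _.
by rewrite !mxE /energy_density /mass_weight; ring.
Qed.

Lemma half_grad_centred lam c z u :
  massV w r (onesV R n) != 0 -> lam != 0 -> massV w r z = massV w r u ->
  let beta := lam^-1 *: (half_grad lam z u - c *: onesV R n) in
  u - z - lam *: u + (lam * meanV w r u) *: onesV R n
  = lam *: beta - (lam * meanV w r beta) *: onesV R n.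
Proof.
move=> mass1_neq0 lam_neq0 mass_z beta.
rewrite /beta /meanV scalerA mulfV // scale1r /half_grad.
rewrite !(massVZ, massVN, massVD) mass_z.
by apply/matrixP => i j; rewrite !mxE; field; rewrite lam_neq0 mass1_neq0.
Qed.

Hypothesis n_gt1 : (1 < n)%N.
Hypothesis w_sym : forall i j, w i j = w j i.
Hypothesis w_ge0 : forall i j, 0 <= w i j.
Hypothesis w_connected : forall i j, connect (fun a b : 'I_n => 0 < w a b) i j.

Lemma deg_gt0 i : 0 < deg w i.
Proof.
have [j ji] : exists j : 'I_n, j != i.
  pose k0 : 'I_n := Ordinal (ltnW n_gt1); pose k1 : 'I_n := Ordinal n_gt1.
  by have [->|ik0] := eqVneq i k0; [exists k1 | exists k0; rewrite eq_sym].
have /connectP [[|b p] /= edge_path last_j] := w_connected i j.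
  by rewrite last_j eqxx in ji.
case/andP: edge_path => w_ib _.
by rewrite /deg (bigD1 b) //= ltr_wpDr ?sumr_ge0.
Qed.

Lemma mass_weight_gt0 i : 0 < mass_weight i.
Proof. exact/powR_gt0/deg_gt0. Qed.

Lemma massV_onesV_gt0 : 0 < massV w r (onesV R n).
Proof.
rewrite /massV /ipV (bigD1 (Ordinal (ltnW n_gt1))) //= ltr_wpDr ?sumr_ge0 //.
  by move=> i _; rewrite !mxE !mul1r powR_ge0.
by rewrite !mxE !mul1r mass_weight_gt0.
Qed.

Lemma mass_row_laplacian c : mass_row *m (c *: laplacian w r) = 0.
Proof.
apply/rowP => l; rewrite !mxE.
have weight_cancel i :
    mass_row 0 i * (c *: laplacian w r) i l = c * ((i == l)%:R * deg w i - w i l).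
  have := mass_weight_gt0 i; rewrite !mxE /mass_weight powRN => weight_gt0.
  by field; rewrite gt_eqF.
under eq_bigr do rewrite weight_cancel.
rewrite -mulr_sumr sumrB (bigD1 l) //= eqxx mul1r big1 ?addr0 => [|i /negPf->]; last first.
  by rewrite mul0r.
by under [X in _ - X]eq_bigr do rewrite w_sym; rewrite subrr mulr0.
Qed.

Lemma massV_expm_laplacian c x :
  massV w r (expm (c *: laplacian w r) *m x) = massV w r x.
Proof. by rewrite !massV_mulmx mulmxA mulmx_expm_id ?mass_row_laplacian. Qed.

End GraphMass.

Theorem theorem32 (R : realType) (n : nat) (w : 'M[R]_n) (r eps tau : R)
  (un u : 'cV[R]_n) :
  (1 < n)%N ->
  (forall i j, w i j = w j i) ->
  (forall i j, 0 <= w i j) ->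
  (forall i, w i i = 0) ->
  (forall i j, connect (fun a b : 'I_n => 0 < w a b) i j) ->
  0 <= r <= 1 ->
  0 < eps ->
  0 <= tau <= eps ->
  inV01 un ->
  let lam := tau / eps in
  let z := expm (- tau *: laplacian w r) *m un in
  let F := fun v : 'cV[R]_n =>
    lam * ipV w r v (onesV R n - v) + normV2 w r (v - z) in
  (inV01 u /\ massV w r u = massV w r un) ->
  (forall v, inV01 v -> massV w r v = massV w r un -> F u <= F v) ->
  exists beta : 'cV[R]_n, inB u beta /\
    u - z - lam *: u + (lam * meanV w r u) *: onesV R n
    = lam *: beta - (lam * meanV w r beta) *: onesV R n.
Proof.
move=> n_gt1 w_sym w_ge0 _ w_conn _ eps_gt0 /andP[tau_ge0 _] un01 lam z F [u01 mass_u] F_min.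
have z_heat : z = expm (- tau *: laplacian w r) *m un by [].
clearbody z; pose m := mass_weight w r.
have m_gt0 i : 0 < m i := mass_weight_gt0 r n_gt1 w_ge0 w_conn i.
have u_min v : inV01 v -> wmass m v = wmass m u -> energy m lam z u <= energy m lam z v.
  by move=> v01; rewrite -!massV_wmass -!energy_ipV mass_u; apply: F_min.
have mass_z : massV w r z = massV w r u by rewrite z_heat massV_expm_laplacian // mass_u.
have [tau0 | tau_neq0] := eqVneq tau 0.
  have lam0 : lam = 0 by rewrite /lam tau0 mul0r.
  have z_un : z = un by rewrite z_heat tau0 oppr0 scale0r expm0 mul1mx.
  have u_z : u = z.
    apply: (minimiser_eq_target m_gt0 u_min lam0); first by rewrite z_un.
    by rewrite -!massV_wmass mass_z.
  exists 0; split; first by move=> i; rewrite mxE.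
  by rewrite lam0 u_z !mul0r !scale0r subrr !subr0 addr0.
have lam_neq0 : lam != 0 by rewrite mulf_neq0 // invr_neq0 // lt0r_neq0.
have [c kkt] := half_grad_multiplier m_gt0 u01 u_min.
exists (lam^-1 *: (half_grad lam z u - c *: onesV R n)); split.
  by apply: inBZ; rewrite // invr_ge0 divr_ge0 // ltW.
apply: half_grad_centred => //.
exact/lt0r_neq0/(massV_onesV_gt0 r n_gt1 w_ge0 w_conn).
Qed.
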